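(* Let $X$ be a real Hilbert space of dimension $d$ with unit ball $\mathcal B$, $V\subseteq X$ a subspace, $\Omega\subseteq X$ a symmetric convex set, and $R>0$, and suppose $\mathcal B/V\subseteq R(\Omega\cap\mathcal B)/V$. Then there is a linear map $T:X\to X$ with $\|T\|_{op}\le dR$ such that for all $x\in X$: $x-Tx\in V$ and $Tx\in dR|x|(\Omega\cap\mathcal B)$.
   Context: For $A\subseteq X$, $A/V=\{a+V:a\in A\}\subseteq X/V$; thus $\mathcal B/V\subseteq R(\Omega\cap\mathcal B)/V$ means every $b\in\mathcal B$ differs from some element of $R(\Omega\cap\mathcal B)$ by an element of $V$. *)

(* A d-dimensional real Hilbert space is modelled as the
   row-vector space 'rV[R]_d with the standard (Euclidean) inner product,
   over an arbitrary R : realType. *)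
From HB Require Import structures.
From mathcomp Require Import all_boot all_order all_algebra.
From mathcomp Require Import reals.
Set Implicit Arguments. Unset Strict Implicit. Unset Printing Implicit Defensive.
Import Order.TTheory GRing.Theory Num.Theory.
Local Open Scope ring_scope.

Definition dotv (R : realType) (d : nat) (x y : 'rV[R]_d) : R :=
  \sum_(i < d) x 0 i * y 0 i.

Definition hnorm (R : realType) (d : nat) (x : 'rV[R]_d) : R :=
  Num.sqrt (dotv x x).

Definition unit_ball (R : realType) (d : nat) : 'rV[R]_d -> Prop :=
  fun x => hnorm x <= 1.

Definition symmetric_set (R : realType) (d : nat) (O : 'rV[R]_d -> Prop) :=
  forall x, O x -> O (- x).

Definition convex_set (R : realType) (d : nat) (O : 'rV[R]_d -> Prop) :=
  forall x y (t : R), O x -> O y -> 0 <= t -> t <= 1 ->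
    O (t *: x + (1 - t) *: y).

From HB Require Import structures.
From mathcomp Require Import all_boot all_order all_algebra.
From mathcomp Require Import reals.
From mathcomp Require Import ring lra.
Import Order.TTheory GRing.Theory Num.Theory.
Local Open Scope ring_scope.

(* Let S = Omega ∩ B; it is symmetric, convex and contains 0.
   Applying the hypothesis to the standard basis vectors e_i (which lie in
   B) gives w_i ∈ S with e_i - Rad w_i ∈ V.  The linear map T with
   e_i T = Rad w_i then satisfies x - xT = Σ_i x_i (e_i - Rad w_i) ∈ V, and
   xT = Σ_i (x_i Rad) w_i is an "absolutely convex" combination of points
   of S with total weight Σ_i |x_i| Rad <= d Rad |x|; hence xT is
   d Rad |x| times a point of S, which also yields ||T|| <= d Rad. *)

Section Euclidean.
Context {R : realType} {d : nat}.
Implicit Types (x y z : 'rV[R]_d) (c : R).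

Lemma dotvC x y : dotv x y = dotv y x.
Proof. by apply: eq_bigr => i _; rewrite mulrC. Qed.

Lemma dotvDl x y z : dotv (x + y) z = dotv x z + dotv y z.
Proof. by rewrite /dotv -big_split; apply: eq_bigr => i _; rewrite mxE mulrDl. Qed.

Lemma dotvZl c x y : dotv (c *: x) y = c * dotv x y.
Proof. by rewrite /dotv mulr_sumr; apply: eq_bigr => i _; rewrite mxE mulrA. Qed.

Lemma dotvDr x y z : dotv z (x + y) = dotv z x + dotv z y.
Proof. by rewrite dotvC dotvDl !(dotvC z). Qed.

Lemma dotvZr c x y : dotv y (c *: x) = c * dotv y x.
Proof. by rewrite dotvC dotvZl dotvC. Qed.

Lemma dotv_ge0 x : 0 <= dotv x x.
Proof. by apply: sumr_ge0 => i _; rewrite -expr2 sqr_ge0. Qed.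

Lemma dotv_eq0 x : dotv x x = 0 -> x = 0.
Proof.
move/eqP; rewrite psumr_eq0 => [/allP x0|i _]; last by rewrite -expr2 sqr_ge0.
apply/rowP => i; rewrite mxE.
by have := x0 i (mem_index_enum i); rewrite /= mulf_eq0 orbb => /eqP.
Qed.

Lemma hnorm_ge0 x : 0 <= hnorm x.
Proof. exact: sqrtr_ge0. Qed.

Lemma hnorm_sq x : hnorm x ^+ 2 = dotv x x.
Proof. by rewrite /hnorm sqr_sqrtr // dotv_ge0. Qed.

Lemma hnormZ c x : hnorm (c *: x) = `|c| * hnorm x.
Proof.
by rewrite /hnorm dotvZl dotvZr mulrA -expr2 sqrtrM ?sqr_ge0 // sqrtr_sqr.
Qed.

Lemma hnorm0 : hnorm (0 : 'rV[R]_d) = 0.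
Proof. by rewrite -(scale0r 0) hnormZ normr0 mul0r. Qed.

Lemma hnormN x : hnorm (- x) = hnorm x.
Proof. by rewrite -scaleN1r hnormZ normrN normr1 mul1r. Qed.

Lemma hnorm_eq0 x : hnorm x = 0 -> x = 0.
Proof. by move=> x0; apply: dotv_eq0; rewrite -hnorm_sq x0 expr2 mul0r. Qed.

Lemma dotv0l y : dotv 0 y = 0.
Proof. by rewrite /dotv big1 // => i _; rewrite mxE mul0r. Qed.

(* Cauchy–Schwarz: |x||y|(|x||y| - <x,y>) is half the squared norm of
   |y| x - |x| y, and the degenerate cases |x| = 0 or |y| = 0 are trivial. *)
Lemma dotv_le_hnorm x y : dotv x y <= hnorm x * hnorm y.
Proof.
have [/hnorm_eq0 ->|nx0] := eqVneq (hnorm x) 0; first by rewrite dotv0l hnorm0 mul0r.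
have [/hnorm_eq0 ->|ny0] := eqVneq (hnorm y) 0.
  by rewrite dotvC dotv0l hnorm0 mulr0.
have := dotv_ge0 (hnorm y *: x - hnorm x *: y).
rewrite -!scaleNr dotvDl !dotvDr !dotvZl !dotvZr (dotvC y x)
  -(hnorm_sq x) -(hnorm_sq y) => h.
have nxy_gt0 : 0 < hnorm x * hnorm y.
  by rewrite mulr_gt0 // lt_def ?nx0 ?ny0 hnorm_ge0.
have : 0 <= hnorm x * hnorm y * (hnorm x * hnorm y - dotv x y) by nra.
by rewrite pmulr_rge0 // subr_ge0.
Qed.

Lemma hnormD x y : hnorm (x + y) <= hnorm x + hnorm y.
Proof.
rewrite -(ger0_norm (addr_ge0 (hnorm_ge0 x) (hnorm_ge0 y))) -sqrtr_sqr.
apply: ler_wsqrtr.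
rewrite dotvDl !dotvDr (dotvC y x) -(hnorm_sq x) -(hnorm_sq y).
have := dotv_le_hnorm x y; nra.
Qed.

Lemma coord_le_hnorm x (i : 'I_d) : `|x 0 i| <= hnorm x.
Proof.
rewrite -sqrtr_sqr; apply: ler_wsqrtr.
rewrite /dotv (bigD1 i) //= -expr2 lerDl.
by apply: sumr_ge0 => j _; rewrite -expr2 sqr_ge0.
Qed.

Lemma sum_coord_le_hnorm x : \sum_(i < d) `|x 0 i| <= d%:R * hnorm x.
Proof.
apply: le_trans (_ : \sum_(i < d) hnorm x <= _).
  by apply: ler_sum => i _; exact: coord_le_hnorm.
by rewrite sumr_const card_ord mulr_natl.
Qed.

Lemma unit_ball_delta (i : 'I_d) : unit_ball (delta_mx 0 i : 'rV[R]_d).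
Proof.
rewrite /unit_ball /hnorm.
suff -> : dotv (delta_mx 0 i : 'rV[R]_d) (delta_mx 0 i) = 1 by rewrite sqrtr1.
rewrite /dotv (bigD1 i) //= big1 => [|j ji]; first by rewrite !mxE !eqxx mulr1 addr0.
by rewrite !mxE (negPf ji) andbF mul0r.
Qed.

Lemma unit_ball_sym : symmetric_set (@unit_ball R d).
Proof. by move=> x; rewrite /unit_ball hnormN. Qed.

Lemma unit_ball_conv : convex_set (@unit_ball R d).
Proof.
move=> x y t Bx By t0 t1; rewrite /unit_ball.
apply: le_trans (hnormD _ _) _.
rewrite !hnormZ (ger0_norm t0) ger0_norm ?subr_ge0 //.
move: Bx By; rewrite /unit_ball; nra.
Qed.

End Euclidean.

Section SymmetricConvex.
Context {R : realType} {d : nat}.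
Implicit Types (S : 'rV[R]_d -> Prop).

Lemma symmetric_setI {S1 S2} : symmetric_set S1 -> symmetric_set S2 ->
  symmetric_set (fun x => S1 x /\ S2 x).
Proof. by move=> sym1 sym2 x [/sym1 ? /sym2 ?]. Qed.

Lemma convex_setI {S1 S2} : convex_set S1 -> convex_set S2 ->
  convex_set (fun x => S1 x /\ S2 x).
Proof.
by move=> conv1 conv2 x y t [? ?] [? ?] t0 t1; split; [apply: conv1 | apply: conv2].
Qed.

Context {S : 'rV[R]_d -> Prop}.
Hypotheses (Ssym : symmetric_set S) (Sconv : convex_set S).

(* A nonempty symmetric convex set contains the midpoint 0 of w and -w. *)
Lemma symmetric_convex_has0 {w} : S w -> S 0.
Proof.
move=> Sw; have := Sconv w (- w) (1 / 2) Sw (Ssym _ Sw).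
have -> : (1 - 1 / 2 : R) = 1 / 2 by field.
rewrite scalerN subrr; apply; first by rewrite divr_ge0.
by rewrite ler_pdivrMr // mul1r ler1n.
Qed.

Hypothesis S0 : S 0.

Lemma absconv_sum (I : Type) (r : seq I) (a : I -> R) (p : I -> 'rV[R]_d) :
  (forall i, S (p i)) ->
  exists q, S q /\ \sum_(i <- r) a i *: p i = (\sum_(i <- r) `|a i|) *: q.
Proof.
move=> Sp; elim: r => [|i r [q [Sq IH]]]; first by exists 0; rewrite !big_nil scaler0.
rewrite !big_cons IH; set t := `|a i|; set s := \sum_(j <- r) `|a j|.
have [p' [Sp' ->]] : exists p', S p' /\ a i *: p i = t *: p'.
  have [ai0|ai0] := lerP 0 (a i).
    by exists (p i); rewrite /t ger0_norm.
  by exists (- p i); rewrite /t ltr0_norm // scaleNr scalerN opprK; split; [exact: Ssym|].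
have t0 : 0 <= t by exact: normr_ge0.
have s0 : 0 <= s by apply: sumr_ge0 => j _; exact: normr_ge0.
have [ts_eq0|ts_neq0] := eqVneq (t + s) 0.
  move: ts_eq0 => /eqP; rewrite paddr_eq0 // => /andP[/eqP t_eq0 /eqP s_eq0].
  by exists q; split => //; rewrite t_eq0 s_eq0 addr0 !scale0r addr0.
have ts_gt0 : 0 < t + s by rewrite lt_def ts_neq0 addr_ge0.
exists ((t / (t + s)) *: p' + (1 - t / (t + s)) *: q); split.
  apply: Sconv => //; first by rewrite divr_ge0 // ltW.
  by rewrite ler_pdivrMr // mul1r lerDl.
by rewrite scalerDr !scalerA; congr (_ *: _ + _ *: _); field.
Qed.

Lemma absconv_rescale q s c : S q -> 0 <= s -> s <= c ->
  exists w, S w /\ s *: q = c *: w.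
Proof.
move=> Sq s0 sc; have [c0|c0] := eqVneq c 0.
  have -> : s = 0 by apply/le_anti; rewrite s0 -c0 sc.
  by exists 0; rewrite c0 !scale0r.
have c_gt0 : 0 < c by rewrite lt_def c0 (le_trans s0 sc).
exists ((s / c) *: q); split; last by rewrite scalerA mulrC divfK.
have := Sconv q 0 (s / c) Sq S0 (divr_ge0 s0 (ltW c_gt0)).
by rewrite scaler0 addr0; apply; rewrite ler_pdivrMr // mul1r.
Qed.

End SymmetricConvex.

Section RowMap.
Context {R : realType} {d : nat}.
Variables (Rad : R) (W : 'I_d -> 'rV[R]_d).

Definition row_map : 'M[R]_d := \matrix_(i, j) (Rad *: W i) 0 j.

Lemma row_mapE (x : 'rV[R]_d) : x *m row_map = \sum_i (x 0 i * Rad) *: W i.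
Proof.
rewrite mulmx_sum_row; apply: eq_bigr => i _; rewrite -scalerA; congr (_ *: _).
by apply/rowP => j; rewrite !mxE.
Qed.

Lemma row_map_residue (V : 'M[R]_d) (x : 'rV[R]_d) :
  (forall i, (delta_mx 0 i - Rad *: W i <= V)%MS) -> (x - x *m row_map <= V)%MS.
Proof.
move=> resV; rewrite row_mapE {1}(row_sum_delta x) -sumrB.
by apply: summx_sub => i _; rewrite -scalerA -scalerBr scalemx_sub.
Qed.

Lemma row_map_image {S : 'rV[R]_d -> Prop} (x : 'rV[R]_d) :
  symmetric_set S -> convex_set S -> S 0 -> (forall i, S (W i)) -> 0 <= Rad ->
  exists w, S w /\ x *m row_map = (d%:R * Rad * hnorm x) *: w.
Proof.
move=> Ssym Sconv S0 SW Rad0; rewrite row_mapE.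
have [q [Sq ->]] := absconv_sum Ssym Sconv S0 _ (index_enum 'I_d)
  (fun i => x 0 i * Rad) W SW.
apply: absconv_rescale => //; first by apply: sumr_ge0 => i _.
under eq_bigr do rewrite normrM (ger0_norm Rad0).
rewrite -mulr_suml mulrAC ler_wpM2r //; exact: sum_coord_le_hnorm.
Qed.

End RowMap.

Theorem lemma8p3 (R : realType) (d : nat) (V : 'M[R]_d)
    (Omega : 'rV[R]_d -> Prop) (Rad : R) :
  symmetric_set Omega -> convex_set Omega -> 0 < Rad ->
  (* B/V ⊆ R(Ω ∩ B)/V *)
  (forall b : 'rV[R]_d, unit_ball b ->
     exists w : 'rV[R]_d, Omega w /\ unit_ball w /\ (b - Rad *: w <= V)%MS) ->
  exists T : 'M[R]_d,
    (* ||T||_op <= d R *)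
    (forall x : 'rV[R]_d, hnorm (x *m T) <= d%:R * Rad * hnorm x) /\
    (forall x : 'rV[R]_d,
       (x - x *m T <= V)%MS /\
       exists w : 'rV[R]_d, Omega w /\ unit_ball w /\
         x *m T = (d%:R * Rad * hnorm x) *: w).
Proof.
move=> Osym Oconv Rad_gt0 quotient_incl.
pose S w := Omega w /\ unit_ball w.
have Ssym : symmetric_set S := symmetric_setI Osym unit_ball_sym.
have Sconv : convex_set S := convex_setI Oconv unit_ball_conv.
have B0 : unit_ball (0 : 'rV[R]_d) by rewrite /unit_ball hnorm0 ler01.
have [w0 [Ow0 [Bw0 _]]] := quotient_incl 0 B0.
have S0 : S 0 := symmetric_convex_has0 Ssym Sconv (conj Ow0 Bw0).
(* each basis vector e_i lies in B, so it lifts through B/V ⊆ Rad S/V *)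
have lift i : exists2 w, S w & (delta_mx 0 i - Rad *: w <= V)%MS.
  by have [w [Ow [Bw resw]]] := quotient_incl _ (unit_ball_delta i); exists w.
have [W SW resW] := fin_all_exists2 lift.
have image x := row_map_image Rad W x Ssym Sconv S0 SW (ltW Rad_gt0).
have scale_ge0 x : 0 <= d%:R * Rad * hnorm x.
  by rewrite mulr_ge0 ?hnorm_ge0 // mulr_ge0 // ltW.
exists (row_map Rad W); split => x.
  have [w [[_ Bw] ->]] := image x.
  by rewrite hnormZ ger0_norm // ler_piMr.
split; first exact: row_map_residue.
by have [w [[Ow Bw] ->]] := image x; exists w.
Qed.
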